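(* Let $A,B\in\mathbb{C}^{n\times n}$ and let $C=A+B$. Then \[|\Lambda(C)|\leq(\operatorname{rank}(B)+1)\,|\Lambda(A)|+d(A)-d(C).\]
   Context: For $M\in\mathbb{C}^{n\times n}$, $\Lambda(M)$ denotes the set of distinct eigenvalues of $M$ and $|\cdot|$ the cardinality of a set. For $\lambda\in\Lambda(M)$, $m_a(M,\lambda)$ is its algebraic multiplicity (multiplicity as a root of the characteristic polynomial) and $m_g(M,\lambda)$ its geometric multiplicity (dimension of the eigenspace). The defectivity of $M$ is $d(M):=\sum_{\lambda\in\Lambda(M)}\big(m_a(M,\lambda)-m_g(M,\lambda)\big)$. *)

(* Complex numbers are modelled as R[i] = complex R for an
   arbitrary R : realType (every realType is isomorphic to the reals). *)
From mathcomp Require Import all_boot all_order all_algebra.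
From mathcomp Require Import reals complex.
Set Implicit Arguments. Unset Strict Implicit. Unset Printing Implicit Defensive.
Import Order.TTheory GRing.Theory Num.Theory.
Local Open Scope ring_scope.

Section Defs.
Variables (F : fieldType) (n : nat).

Definition is_spectrum (M : 'M[F]_n) (s : seq F) : Prop :=
  uniq s /\ (forall l : F, (l \in s) = eigenvalue M l).

Definition alg_mult (M : 'M[F]_n) (l : F) : nat := mup l (char_poly M).

Definition geo_mult (M : 'M[F]_n) (l : F) : nat := \rank (eigenspace M l).

Definition defectivity (M : 'M[F]_n) (s : seq F) : int :=
  \sum_(l <- s) ((alg_mult M l)%:Z - (geo_mult M l)%:Z).
End Defs.

From mathcomp Require Import all_boot all_order all_algebra.
From mathcomp Require Import reals complex.
From mathcomp Require Import zify.
Set Implicit Arguments. Unset Strict Implicit. Unset Printing Implicit Defensive.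
Import Order.TTheory GRing.Theory Num.Theory.
Local Open Scope ring_scope.

(* Adding B changes each eigenspace ker (A - l I) by at most rank B in dimension,
   so g_A(l) <= g_C(l) + rank B for every l, and g(l) > 0 exactly on the spectrum.
   Over an algebraically closed field the algebraic multiplicities over the
   spectrum add up to n, so d(M) = n - sum_l g_M(l) and the theorem becomes
   |Lambda(C)| + sum g_A <= (rank B + 1) |Lambda(A)| + sum g_C, which follows by
   summing the pointwise bound
   [l in Lambda(C)] + g_A(l) <= (rank B + 1) [l in Lambda(A)] + g_C(l)
   over the union of both spectra. *)

Lemma big_uniq_support (R : Type) (idx : R) (op : Monoid.com_law idx)
    (I : eqType) (s u : seq I) (F : I -> R) :
  uniq s -> uniq u -> {subset s <= u} ->
  (forall i, i \notin s -> F i = idx) ->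
  \big[op/idx]_(i <- s) F i = \big[op/idx]_(i <- u) F i.
Proof.
move=> us uu su F0; rewrite [RHS](bigID (mem s)) /= [X in op _ X]big1 //.
rewrite Monoid.mulm1 -[RHS]big_filter; apply: perm_big.
apply: uniq_perm; rewrite ?filter_uniq // => i.
by rewrite mem_filter andb_idr //; apply: su.
Qed.

Lemma sum_count_mem_uniq (T : eqType) (s r : seq T) :
  uniq s -> {subset r <= s} -> (\sum_(x <- s) count_mem x r)%N = size r.
Proof.
move=> us rs; rewrite -(big_uniq_support _ (undup_uniq r) us); last first.
- by move=> x; rewrite mem_undup => /count_memPn.
- by move=> x; rewrite mem_undup => /rs.
rewrite -[RHS]count_predT -sum1_count -[RHS]big_undup_iterop_count.
by apply: eq_bigr => x _; rewrite Monoid.iteropE iter_addn_0 mul1n.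
Qed.

Section GeometricMultiplicity.
Variables (F : fieldType) (n : nat).
Implicit Types (A B M : 'M[F]_n) (l : F) (s u : seq F).

Lemma eigenvalue_geo_mult M l : eigenvalue M l = (0 < geo_mult M l)%N.
Proof. by rewrite /eigenvalue /geo_mult lt0n mxrank_eq0. Qed.

Lemma geo_mult_eq0 M l : ~~ eigenvalue M l -> geo_mult M l = 0%N.
Proof. by rewrite eigenvalue_geo_mult lt0n negbK => /eqP. Qed.

Lemma geo_mult_le_addr A B l :
  (geo_mult A l <= geo_mult (A + B) l + \rank B)%N.
Proof.
rewrite /geo_mult /eigenspace !mxrank_ker.
have := mxrank_add (A - l%:M) B; rewrite addrAC.
by move: (\rank (A - l%:M)) (\rank (A + B - l%:M)) (\rank B) => a c r; lia.
Qed.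

Lemma eigenvalue_geo_mult_addr_le A B l :
  (eigenvalue (A + B) l + geo_mult A l
   <= (\rank B).+1 * eigenvalue A l + geo_mult (A + B) l)%N.
Proof.
have := geo_mult_le_addr A B l; rewrite !eigenvalue_geo_mult.
by case: (geo_mult A l) => [|a]; case: (geo_mult (A + B) l); lia.
Qed.

Lemma sum_spectrum_support M s u (G : F -> nat) :
  is_spectrum M s -> uniq u -> {subset s <= u} ->
  (forall l, ~~ eigenvalue M l -> G l = 0%N) ->
  (\sum_(l <- s) G l = \sum_(l <- u) G l)%N.
Proof.
by move=> [us sE] uu su G0; apply: big_uniq_support => // l; rewrite sE => /G0.
Qed.

Lemma size_spectrum M s :
  is_spectrum M s -> size s = (\sum_(l <- s) eigenvalue M l)%N.
Proof.
move=> [_ sE]; rewrite -sum1_size big_seq [RHS]big_seq.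
by apply: eq_bigr => l; rewrite sE => ->.
Qed.

Lemma size_spectrum_addr_le A B sA sC :
  is_spectrum A sA -> is_spectrum (A + B) sC ->
  (size sC + \sum_(l <- sA) geo_mult A l
   <= (\rank B).+1 * size sA + \sum_(l <- sC) geo_mult (A + B) l)%N.
Proof.
move=> specA specC; set u := undup (sA ++ sC).
have uu : uniq u by apply: undup_uniq.
have sAu : {subset sA <= u} by move=> l; rewrite mem_undup mem_cat => ->.
have sCu : {subset sC <= u} by move=> l; rewrite mem_undup mem_cat orbC => ->.
rewrite (size_spectrum specA) (size_spectrum specC) big_distrr /=.
rewrite (sum_spectrum_support specA uu sAu (@geo_mult_eq0 A)).
rewrite (sum_spectrum_support specC uu sCu (@geo_mult_eq0 (A + B))).
rewrite (sum_spectrum_support specA uu sAu) => [|l /negbTE ->]; last exact: muln0.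
rewrite (sum_spectrum_support specC uu sCu) => [|l /negbTE ->] //.
rewrite -!big_split /=; apply: leq_sum => l _.
exact: eigenvalue_geo_mult_addr_le.
Qed.

End GeometricMultiplicity.

Section AlgebraicMultiplicity.
Variables (F : closedFieldType) (n : nat).

Lemma sum_alg_mult_spectrum (M : 'M[F]_n) s :
  is_spectrum M s -> (\sum_(l <- s) alg_mult M l)%N = n.
Proof.
move=> [us sE]; have [r defM] := closed_field_poly_normal (char_poly M).
rewrite (monicP (char_poly_monic M)) scale1r in defM.
have size_r : size r = n.
  by have := size_char_poly M; rewrite defM size_prod_XsubC => -[].
rewrite -[RHS]size_r -(sum_count_mem_uniq us); last first.
  by move=> l lr; rewrite sE eigenvalue_root_char defM root_prod_XsubC.
by apply: eq_bigr => l _; rewrite /alg_mult defM mu_prod_XsubC.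
Qed.

Lemma defectivityE (M : 'M[F]_n) s :
  is_spectrum M s ->
  defectivity M s = n%:Z - (\sum_(l <- s) geo_mult M l)%N%:Z.
Proof.
move=> specM; rewrite /defectivity sumrB -!(big_morph Posz PoszD (erefl 0%:Z)).
by rewrite (sum_alg_mult_spectrum specM).
Qed.

End AlgebraicMultiplicity.

Theorem theorem3p1 (R : realType) (n : nat) (A B : 'M[R[i]]_n)
    (sA sC : seq R[i]) :
  is_spectrum A sA -> is_spectrum (A + B) sC ->
  (size sC)%:Z <= ((\rank B).+1)%:Z * (size sA)%:Z
                  + defectivity A sA - defectivity (A + B) sC.
Proof.
move=> specA specC; rewrite (defectivityE specA) (defectivityE specC).
have := size_spectrum_addr_le specA specC.
move: (\sum_(l <- sA) _)%N (\sum_(l <- sC) _)%N => gA gC.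
by move: (size sC) (size sA) (\rank B) => c a r; lia.
Qed.
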